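(* Let $n\ge 5$ and let $G$ be a unicyclic graph on $n$ vertices. Suppose $G\not\cong C_n$ and the degree sequence of $G$ is not $(3,2,\ldots,2,1)$ (one vertex of degree $3$, $n-2$ of degree $2$, one of degree $1$). Then $\mathrm{irr}_t(G)\ge 4n-8$. Equality holds if and only if the degree sequence of $G$ is $(3,3,2,\ldots,2,1,1)$, i.e. two vertices of degree $3$, $n-4$ vertices of degree $2$ and two vertices of degree $1$.
   Context: A unicyclic graph is a simple connected graph whose number of edges equals its number of vertices. For a graph $G=(V,E)$ and $w\in V$, $d_G(w)$ is the degree of $w$. The total irregularity is $\mathrm{irr}_t(G)=\frac12\sum_{x,y\in V}|d_G(x)-d_G(y)|$, where the sum runs over all ordered pairs of vertices. $C_n$ is the cycle on $n$ vertices. Degree sequences are listed in nonincreasing order. *)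

From mathcomp Require Import all_boot.
Set Implicit Arguments. Unset Strict Implicit. Unset Printing Implicit Defensive.

Definition simple_graph (T : finType) (e : rel T) : Prop :=
  symmetric e /\ irreflexive e.

Definition connected_graph (T : finType) (e : rel T) : Prop :=
  forall x y : T, connect e x y.

Definition edge_set (T : finType) (e : rel T) : {set {set T}} :=
  [set [set x; y] | x in T, y in T & e x y].

Definition unicyclic (T : finType) (e : rel T) : Prop :=
  [/\ simple_graph e, connected_graph e & #|edge_set e| = #|T|].

Definition deg (T : finType) (e : rel T) (x : T) : nat := #|[set y | e x y]|.

Definition absdiff (m n : nat) : nat := (m - n) + (n - m).

Definition irrt (T : finType) (e : rel T) : nat :=
  (\sum_(x : T) \sum_(y : T) absdiff (deg e x) (deg e y)) %/ 2.

Definition deg_seq (T : finType) (e : rel T) : seq nat :=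
  sort geq [seq deg e x | x <- enum T].

Definition cycle_adj (n : nat) (i j : 'I_n) : bool :=
  (val j == (val i).+1 %% n) || (val i == (val j).+1 %% n).

Definition iso_to_cycle (T : finType) (e : rel T) (n : nat) : Prop :=
  exists f : T -> 'I_n, bijective f /\ forall x y, e x y = cycle_adj (f x) (f y).

(* Let a be the number of leaves and b the number of vertices of degree 2.
   Since the n degrees sum to 2n, the excess sum_x (d(x) - 2)^+ equals a.
   Comparing one degree with all the others, a leaf contributes n, a vertex
   of degree 2 contributes 2a and a vertex of degree d >= 3 at least n(d - 2)
   to sum_(x,y) |d(x) - d(y)|; hence this double sum is at least 2an + 2ab,
   with equality when no degree exceeds 3.  With no leaf the graph is
   2-regular, hence a cycle; one leaf forces the degree sequence
   (3,2,...,2,1); two leaves and maximum degree 3 give exactly 8n - 16; in all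
   other cases 2an + 2ab >= 8n - 14. *)

From mathcomp Require Import all_boot zify.
Set Implicit Arguments. Unset Strict Implicit. Unset Printing Implicit Defensive.

Definition sum_absdiff (s : seq nat) : nat :=
  \sum_(i <- s) \sum_(j <- s) absdiff i j.

Lemma sum_eq_count_mem (s : seq nat) (k : nat) :
  \sum_(i <- s) (i == k : nat) = count_mem k s.
Proof. by elim: s => [|i t IH]; rewrite ?big_nil ?big_cons ?IH. Qed.

Lemma count_deg_partition (s : seq nat) : all (leq 1) s ->
  count_mem 1 s + count_mem 2 s + count_mem 3 s + count (leq 4) s = size s.
Proof.
elim: s => [|i t IH] //= /andP[i_pos /IH].
by case: i i_pos => [|[|[|[|i]]]] //=; lia.
Qed.

Lemma sum_subn2_leaves (s : seq nat) : all (leq 1) s ->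
  \sum_(i <- s) (i - 2) + 2 * size s = sumn s + count_mem 1 s.
Proof.
elim: s => [|i t IH] /=; first by rewrite big_nil.
(* Naming the tail sum makes it a single atom for [lia]: the sums over [t]
   in the goal and in [IH] differ syntactically though they are convertible. *)
case/andP=> i_pos /IH; rewrite big_cons; set S := \sum_(_ <- t) _.
by case: i i_pos => [|[|i]] //=; lia.
Qed.

Lemma counts_ge3_le_sum_subn2 (s : seq nat) :
  count_mem 3 s + 2 * count (leq 4) s <= \sum_(i <- s) (i - 2).
Proof.
elim: s => [|i t IH] /=; first by rewrite big_nil.
rewrite big_cons; move: IH; set S := \sum_(_ <- t) _.
by case: i => [|[|[|[|i]]]] /=; lia.
Qed.

Lemma sum_subn2_eq_count3 (s : seq nat) :
  count (leq 4) s = 0 -> \sum_(i <- s) (i - 2) = count_mem 3 s.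
Proof.
elim: s => [|i t IH] /=; first by rewrite big_nil.
rewrite big_cons; move: IH; set S := \sum_(_ <- t) _.
by case: i => [|[|[|[|i]]]] //= IH /IH; lia.
Qed.

Lemma row_absdiff1 (s : seq nat) : all (leq 1) s ->
  \sum_(j <- s) absdiff 1 j + size s = sumn s.
Proof.
elim: s => [|j t IH] /=; first by rewrite big_nil.
case/andP=> j_pos /IH; rewrite big_cons /absdiff; set S := \sum_(_ <- t) _.
lia.
Qed.

Lemma row_absdiff2 (s : seq nat) : all (leq 1) s ->
  \sum_(j <- s) absdiff 2 j = count_mem 1 s + \sum_(j <- s) (j - 2).
Proof.
elim: s => [|j t IH] /=; first by rewrite !big_nil.
case/andP=> j_pos /IH; rewrite !big_cons /absdiff.
set S1 := \sum_(_ <- t) (_ - _ + _); set S2 := \sum_(_ <- t) (_ - 2).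
by case: j j_pos => [|[|[|j]]] //=; lia.
Qed.

Lemma row_absdiff_ge (s : seq nat) (i : nat) :
  size s * i <= \sum_(j <- s) absdiff i j + sumn s.
Proof.
elim: s => [|j t IH] /=; first by rewrite big_nil.
rewrite big_cons /absdiff; move: IH; set S := \sum_(_ <- t) _.
lia.
Qed.

Lemma row_absdiff3 (s : seq nat) :
  count (leq 4) s = 0 -> \sum_(j <- s) absdiff 3 j + sumn s = size s * 3.
Proof.
elim: s => [|j t IH] /=; first by rewrite big_nil.
rewrite big_cons /absdiff; move: IH; set S := \sum_(_ <- t) _.
by case: j => [|[|[|[|j]]]] //= IH /IH; lia.
Qed.

Definition tadpole_degs n := [:: 3] ++ nseq (n - 2) 2 ++ [:: 1].
Definition extremal_degs n := [:: 3; 3] ++ nseq (n - 4) 2 ++ [:: 1; 1].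

Lemma count_mem_outside123 s k :
  all (leq 1) s -> count (leq 4) s = 0 -> k \notin [:: 1; 2; 3] ->
  count_mem k s = 0.
Proof.
move=> s_pos s_le3; case: k => [|[|[|[|k]]]] //= _.
  by apply/count_memPn; apply: contraTN s_pos => s0; apply/allPn; exists 0.
by apply/eqP; rewrite -leqn0 -s_le3; apply: sub_count => i /eqP->.
Qed.

Lemma perm_eq_counts123 s t :
  all (leq 1) s -> count (leq 4) s = 0 -> all (leq 1) t -> count (leq 4) t = 0 ->
  count_mem 1 s = count_mem 1 t -> count_mem 2 s = count_mem 2 t ->
  count_mem 3 s = count_mem 3 t -> perm_eq s t.
Proof.
move=> s_pos s_le3 t_pos t_le3 count1 count2 count3; apply/allP => k _; apply/eqP.
have [|k_out] := boolP (k \in [:: 1; 2; 3]); last by rewrite !count_mem_outside123.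
by rewrite !inE => /or3P[] /eqP->.
Qed.

Lemma tadpole_degs_counts n :
  [/\ all (leq 1) (tadpole_degs n), count (leq 4) (tadpole_degs n) = 0,
      count_mem 1 (tadpole_degs n) = 1, count_mem 2 (tadpole_degs n) = n - 2
    & count_mem 3 (tadpole_degs n) = 1].
Proof.
by rewrite /tadpole_degs !all_cat all_nseq orbT !count_cat !count_nseq /=; split; lia.
Qed.

Lemma extremal_degs_counts n :
  [/\ all (leq 1) (extremal_degs n), count (leq 4) (extremal_degs n) = 0,
      count_mem 1 (extremal_degs n) = 2, count_mem 2 (extremal_degs n) = n - 4
    & count_mem 3 (extremal_degs n) = 2].
Proof.
by rewrite /extremal_degs !all_cat all_nseq orbT !count_cat !count_nseq /=; split; lia.
Qed.

Lemma path_geq_nseq2 m t : path geq 2 t -> path geq 2 (nseq m 2 ++ t).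
Proof. by move=> t_path; elim: m => //= m ->. Qed.

Lemma tadpole_degs_sorted n : sorted geq (tadpole_degs n).
Proof. by rewrite /tadpole_degs /=; case: (n - 2) => //= m; rewrite path_geq_nseq2. Qed.

Lemma extremal_degs_sorted n : sorted geq (extremal_degs n).
Proof. by rewrite /extremal_degs /=; case: (n - 4) => //= m; rewrite path_geq_nseq2. Qed.

Lemma sort_geqP (s t : seq nat) :
  sorted geq t -> reflect (sort geq s = t) (perm_eq s t).
Proof.
have geq_trans : transitive geq by move=> y x z /= le_yx le_zy; apply: leq_trans le_yx.
have geq_total : total geq by move=> x y; apply: leq_total.
have geq_anti : antisymmetric geq.
  by move=> x y /andP[le_yx le_xy]; apply/eqP; rewrite eqn_leq; apply/andP.
move=> t_sorted; rewrite -[in sort _ s = _](sorted_sort geq_trans t_sorted).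
exact: perm_sortP.
Qed.

(** * Degree sequences with degree sum twice their length *)

Section UnicyclicDegreeSequence.
Variable s : seq nat.
Hypotheses (s_pos : all (leq 1) s) (s_sum : sumn s = 2 * size s).
Local Notation n := (size s).
Local Notation a := (count_mem 1 s).
Local Notation b := (count_mem 2 s).

Lemma sum_subn2_eq_leaves : \sum_(i <- s) (i - 2) = a.
Proof. by have := sum_subn2_leaves s_pos; rewrite s_sum; lia. Qed.

Let row_bound (i : nat) := (i == 1) * n + (i == 2) * (2 * a) + (i - 2) * n.

Lemma row_absdiff_lower i : 0 < i -> row_bound i <= \sum_(j <- s) absdiff i j.
Proof.
rewrite /row_bound; case: i => [|[|[|i]]] // _.
- by have := row_absdiff1 s_pos; rewrite s_sum; lia.
- by rewrite row_absdiff2 // sum_subn2_eq_leaves; lia.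
- by have := row_absdiff_ge s i.+3; rewrite s_sum; lia.
Qed.

Lemma row_absdiff_exact i : count (leq 4) s = 0 -> 0 < i <= 3 ->
  \sum_(j <- s) absdiff i j = row_bound i.
Proof.
rewrite /row_bound => s_le3; case: i => [|[|[|[|i]]]] // _.
- by have := row_absdiff1 s_pos; rewrite s_sum; lia.
- by rewrite row_absdiff2 // sum_subn2_eq_leaves; lia.
- by have := row_absdiff3 s_le3; rewrite s_sum; lia.
Qed.

Lemma sum_row_bound : \sum_(i <- s) row_bound i = 2 * a * n + 2 * a * b.
Proof.
rewrite /row_bound !big_split -!big_distrl !sum_eq_count_mem sum_subn2_eq_leaves /=.
lia.
Qed.

Lemma sum_absdiff_ge : 2 * a * n + 2 * a * b <= sum_absdiff s.
Proof.
rewrite -sum_row_bound /sum_absdiff big_seq [X in _ <= X]big_seq.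
by apply: leq_sum => i /(allP s_pos); apply: row_absdiff_lower.
Qed.

Lemma sum_absdiff_le3 :
  count (leq 4) s = 0 -> sum_absdiff s = 2 * a * n + 2 * a * b.
Proof.
move=> s_le3; have s_small : {in s, forall i, ~~ (3 < i)}.
  by apply/hasPn; rewrite has_count s_le3.
rewrite -sum_row_bound /sum_absdiff; apply: eq_big_seq => i i_s.
by rewrite row_absdiff_exact // (allP s_pos) // leqNgt s_small.
Qed.

Lemma leaves0_nseq2 : a = 0 -> s = nseq n 2.
Proof.
move=> no_leaf; apply/all_pred1P; rewrite all_count; apply/eqP.
have := count_deg_partition s_pos; have := counts_ge3_le_sum_subn2 s.
rewrite sum_subn2_eq_leaves no_leaf /=; lia.
Qed.

Lemma leaves1_tadpole : a = 1 -> perm_eq s (tadpole_degs n).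
Proof.
move=> one_leaf; have := counts_ge3_le_sum_subn2 s; rewrite sum_subn2_eq_leaves.
have := count_deg_partition s_pos => partition excess.
have s_le3 : count (leq 4) s = 0 by lia.
have := sum_subn2_eq_count3 s_le3; rewrite sum_subn2_eq_leaves => one_deg3.
have [t_pos t_le3 t1 t2 t3] := tadpole_degs_counts n.
by apply: perm_eq_counts123; rewrite ?t1 ?t2 ?t3 //; lia.
Qed.

Lemma leaves2_extremal :
  a = 2 -> count (leq 4) s = 0 -> perm_eq s (extremal_degs n).
Proof.
move=> two_leaves s_le3; have := count_deg_partition s_pos.
have := sum_subn2_eq_count3 s_le3; rewrite sum_subn2_eq_leaves => two_deg3 partition.
have [t_pos t_le3 t1 t2 t3] := extremal_degs_counts n.
by apply: perm_eq_counts123; rewrite ?t1 ?t2 ?t3 //; lia.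
Qed.

Lemma sum_absdiff_extremal :
  perm_eq s (extremal_degs n) -> sum_absdiff s = 8 * n - 16.
Proof.
move=> s_ext; have [_ t_le3 t1 t2 _] := extremal_degs_counts n.
have size_s : n = 4 + (n - 4).
  by rewrite {1}(perm_size s_ext) /extremal_degs !size_cat size_nseq /=; lia.
have count_s := permP s_ext.
by rewrite sum_absdiff_le3 !count_s ?t1 ?t2 //; lia.
Qed.

Lemma sum_absdiff_non_extremal : 5 <= n -> 2 <= a ->
  ~~ perm_eq s (extremal_degs n) -> 8 * n - 14 <= sum_absdiff s.
Proof.
move=> n_ge5 two_leaves not_extremal; have := sum_absdiff_ge.
have := count_deg_partition s_pos; have := counts_ge3_le_sum_subn2 s.
rewrite sum_subn2_eq_leaves => excess partition.
have [a2 | a_ge3] := eqVneq a 2; last by nia.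
have [s_le3 | s_big] := eqVneq (count (leq 4) s) 0; last by nia.
by rewrite leaves2_extremal in not_extremal.
Qed.

End UnicyclicDegreeSequence.

Lemma set2_eq (T : finType) (u v x y : T) : u != v ->
  ([set u; v] == [set x; y]) = ((u, v) == (x, y)) || ((u, v) == (y, x)).
Proof.
move=> uv; apply/eqP/idP => [E | /orP[] /eqP[-> ->] //]; last exact: setUC.
have /set2P[] : u \in [set x; y] by rewrite -E set21.
all: have /set2P[] : v \in [set x; y] by rewrite -E set22.
all: by move=> ev eu; subst u v; rewrite ?eqxx ?orbT // in uv *.
Qed.

Section Handshake.
Variables (T : finType) (e : rel T).
Hypotheses (e_sym : symmetric e) (e_irr : irreflexive e).

Definition darts := [set p : T * T | e p.1 p.2].

Lemma deg_sum_adj x : deg e x = \sum_y (e x y : nat).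
Proof.
rewrite /deg -sum1_card big_mkcond; apply: eq_bigr => y _.
by rewrite inE; case: (e x y).
Qed.

Lemma sum_deg_darts : \sum_x deg e x = #|darts|.
Proof.
rewrite (eq_bigr _ (fun x _ => deg_sum_adj x)) pair_big -sum1_card [RHS]big_mkcond.
apply: eq_bigr => -[x y] _.
by rewrite inE; case: (e x y).
Qed.

Lemma darts_fiber x y : e x y ->
  [set p in darts | [set p.1; p.2] == [set x; y]] = [set (x, y); (y, x)].
Proof.
move=> exy; apply/setP => -[u v]; rewrite !inE /=.
have [euv | neuv] := boolP (e u v); last first.
  by apply/esym/negbTE; apply: contra neuv => /orP[] /eqP[-> ->] //; rewrite e_sym.
by rewrite set2_eq //; apply: contraTneq euv => ->; rewrite e_irr.
Qed.

Lemma card_darts : #|darts| = 2 * #|edge_set e|.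
Proof.
pose ends (p : T * T) := [set p.1; p.2].
have edges : edge_set e = ends @: darts.
  apply/setP => E; apply/imset2P/imsetP => [[x y _] | [[x y]]].
    by rewrite inE => exy ->; exists (x, y); rewrite ?inE.
  by rewrite inE => exy ->; exists x y; rewrite ?inE.
rewrite -sum1_card (partition_big_imset ends) -edges mulnC -sum_nat_const.
apply: eq_bigr => E /imset2P[x y _]; rewrite inE => /andP[_ exy] ->.
rewrite sum1_card -cardsE darts_fiber // cards2.
suff -> : (x, y) != (y, x) by [].
by apply: contraTneq exy => -[->]; rewrite e_irr.
Qed.

Lemma handshake : \sum_x deg e x = 2 * #|edge_set e|.
Proof. by rewrite sum_deg_darts card_darts. Qed.

End Handshake.

Lemma deg_gt0 (T : finType) (e : rel T) :
  connected_graph e -> 1 < #|T| -> forall x, 0 < deg e x.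
Proof.
move=> conn T_gt1 x; have /card_gt0P[y] : 0 < #|[set~ x]| by rewrite cardsC1; lia.
rewrite !inE => yx; case/connectP: (conn x y) => -[/= _ y_x | z p /= /andP[exz _] _].
  by rewrite y_x eqxx in yx.
by rewrite /deg (cardsD1 z) inE exz.
Qed.

(** * Connected 2-regular graphs are cycles *)

Section TwoRegular.
Variables (T : finType) (e : rel T).
Hypotheses (e_sym : symmetric e) (e_irr : irreflexive e).
Hypothesis deg2 : forall x, deg e x = 2.

Lemma deg2_third_nbr b x y z :
  e b x -> e b y -> e b z -> x != y -> z = x \/ z = y.
Proof.
move=> ebx eby ebz xy; have := deg2 b.
rewrite /deg (cardsD1 x) (cardsD1 y) (cardsD1 z) !inE ebx eby ebz eq_sym xy /=.
by case: (eqVneq z y) => [|zy]; [right | case: (eqVneq z x) => [|zx]; [left|]].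
Qed.

(* The default [b] is never used: by [deg2], [b] has a neighbour other than [a]. *)
Definition next_nbr a b := odflt b [pick y | e b y && (y != a)].

Lemma next_nbrP a b : e b (next_nbr a b) && (next_nbr a b != a).
Proof.
rewrite /next_nbr; case: pickP => [y //| no_other] /=.
have : [set y | e b y] \subset [set a].
  apply/subsetP => y; rewrite !inE => eby.
  by have := no_other y; rewrite /= eby => /negbFE.
by move/subset_leq_card; rewrite cards1 -/(deg e b) deg2.
Qed.

Variable v0 : T.

Fixpoint walk_state k : T * T :=
  if k is k'.+1 then ((walk_state k').2, next_nbr (walk_state k').1 (walk_state k').2)
  else (v0, next_nbr v0 v0).

Definition walk k := (walk_state k).1.

Lemma walk_stateE k : walk_state k = (walk k, walk k.+1).
Proof. by case: k. Qed.

Lemma walkSS k : walk k.+2 = next_nbr (walk k) (walk k.+1).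
Proof. by rewrite /walk /= -/(walk k) walk_stateE. Qed.

Lemma walk_adj k : e (walk k) (walk k.+1).
Proof.
case: k => [|k]; last by rewrite walkSS; have /andP[] := next_nbrP (walk k) (walk k.+1).
by have /andP[] := next_nbrP v0 v0.
Qed.

Lemma walk_nonbacktrack k : walk k.+2 != walk k.
Proof. by rewrite walkSS; have /andP[] := next_nbrP (walk k) (walk k.+1). Qed.

Lemma walk_shift m : walk m = walk 0 -> walk m.+1 = walk 1 ->
  forall i, walk (m + i) = walk i.
Proof.
move=> walk_m walk_m1.
suff walk2 i : walk (m + i) = walk i /\ walk (m + i).+1 = walk i.+1.
  by move=> i; case: (walk2 i).
elim: i => [|i [IH1 IH2]]; first by rewrite addn0.
by rewrite !addnS !walkSS IH1 IH2.
Qed.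

Definition revisits k := [exists j : 'I_k, walk j == walk k].

Lemma walk_revisits : exists k, revisits k.
Proof.
have /injectivePn[i [j ij walk_ij]] : ~~ injectiveb (fun i : 'I_#|T|.+1 => walk i).
  by apply/injectiveP => /leq_card; rewrite card_ord ltnn.
case: (ltngtP i j) => [lt_ij | lt_ji | /val_inj eq_ij]; last by rewrite eq_ij eqxx in ij.
- by exists j; apply/existsP; exists (Ordinal lt_ij); rewrite /= walk_ij.
- by exists i; apply/existsP; exists (Ordinal lt_ji); rewrite /= walk_ij.
Qed.

Definition period := ex_minn walk_revisits.

Lemma period_revisits : revisits period.
Proof. by rewrite /period; case: ex_minnP. Qed.

Lemma walk_inj_lt_period i j :
  i < period -> j < period -> walk i = walk j -> i = j.
Proof.
have min_period k : revisits k -> period <= k.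
  by rewrite /period; case: ex_minnP => m _; apply.
move=> i_lt j_lt walk_ij; case: (ltngtP i j) => [lt_ij | lt_ji | //].
- have : revisits j by apply/existsP; exists (Ordinal lt_ij); rewrite /= walk_ij.
  by move/min_period; lia.
- have : revisits i by apply/existsP; exists (Ordinal lt_ji); rewrite /= walk_ij.
  by move/min_period; lia.
Qed.

Lemma period_gap : exists2 j, j.+2 < period & walk j = walk period.
Proof.
case/existsP: period_revisits => j /eqP walk_j; exists (val j) => //.
have j_lt := ltn_ord j.
have [period_j1 | [period_j2 | //]] : period = j.+1 \/ period = j.+2 \/ j.+2 < period.
  by lia.
- by have := walk_adj j; rewrite -period_j1 -walk_j e_irr.
- by have := walk_nonbacktrack j; rewrite -period_j2 walk_j eqxx.
Qed.

Lemma period_ge3 : 2 < period.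
Proof. by case: period_gap => j; lia. Qed.

(* A first repetition at a vertex other than [v0] would give that vertex
   three distinct neighbours. *)
Lemma walk_period : walk period = walk 0.
Proof.
case: period_gap => -[//|j] gap walk_j.
have walk_inj := walk_inj_lt_period.
have prev_adj : e (walk j.+1) (walk period.-1).
  by rewrite walk_j e_sym; have := walk_adj period.-1; rewrite prednK //; lia.
have back_adj : e (walk j.+1) (walk j) by rewrite e_sym walk_adj.
have [] := deg2_third_nbr (walk_adj j.+1) back_adj prev_adj (walk_nonbacktrack j).
  by move/walk_inj; lia.
by move/walk_inj; lia.
Qed.

Lemma walk_period_succ : walk period.+1 = walk 1.
Proof.
have p_ge3 := period_ge3.
have next_adj : e (walk period) (walk 1) by rewrite walk_period walk_adj.
have prev_adj : e (walk period) (walk period.-1).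
  by rewrite e_sym; have := walk_adj period.-1; rewrite prednK //; lia.
have next_prev : walk 1 != walk period.-1.
  by apply/eqP => /walk_inj_lt_period; lia.
case: (deg2_third_nbr next_adj prev_adj (walk_adj period) next_prev) => //.
have -> : period.+1 = period.-1.+2 by lia.
by move/eqP; rewrite (negbTE (walk_nonbacktrack _)).
Qed.

Lemma walk_mod i : walk i = walk (i %% period).
Proof.
have shift := walk_shift walk_period walk_period_succ.
rewrite {1}(divn_eq i period); elim: (i %/ period) => [|q IH]; first by rewrite add0n.
by rewrite mulSn -addnA shift.
Qed.

Lemma walk_eq_mod i j : (walk i == walk j) = (i == j %[mod period]).
Proof.
have p_gt0 : 0 < period by have := period_ge3; lia.
rewrite walk_mod [walk j]walk_mod; apply/eqP/eqP => [|-> //].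
by apply: walk_inj_lt_period; rewrite ltn_mod.
Qed.

Lemma walk_pred i : e (walk (i + period.-1)) (walk i).
Proof.
have p_gt0 : 0 < period by have := period_ge3; lia.
have := walk_adj (i + period.-1); rewrite -addnS prednK //.
by rewrite [walk (i + period)]walk_mod modnDr -walk_mod.
Qed.

Lemma walk_nbr i y : e (walk i) y -> y = walk i.+1 \/ y = walk (i + period.-1).
Proof.
move=> ey; have p_ge3 := period_ge3.
apply: (deg2_third_nbr (walk_adj i) _ ey); first by rewrite e_sym walk_pred.
rewrite walk_eq_mod -addn1 eqn_modDl !modn_small; lia.
Qed.

Lemma walk_adjE i j :
  e (walk i) (walk j) = (j == i.+1 %[mod period]) || (i == j.+1 %[mod period]).
Proof.
have p_gt0 : 0 < period by have := period_ge3; lia.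
apply/idP/orP => [/walk_nbr[] /eqP | []].
- by rewrite walk_eq_mod; left.
- rewrite walk_eq_mod => /eqP j_mod; right.
  by rewrite eq_sym -addn1 -modnDml j_mod modnDml -addnA addn1 prednK // modnDr.
- by rewrite -walk_eq_mod => /eqP->; apply: walk_adj.
- by rewrite -walk_eq_mod => /eqP->; rewrite e_sym walk_adj.
Qed.

Lemma walk_in_image k : walk k \in [set walk i | i : 'I_period].
Proof.
have p_gt0 : 0 < period by have := period_ge3; lia.
by apply/imsetP; exists (Ordinal (ltn_pmod k p_gt0)); rewrite // [LHS]walk_mod.
Qed.

Lemma walk_image_full : connected_graph e -> [set walk i | i : 'I_period] = setT.
Proof.
move=> conn; apply/setP => x; rewrite inE.
have closed_image : closed e [set walk i | i : 'I_period].
  suff nbr_in x' y : x' \in [set walk i | i : 'I_period] -> e x' y ->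
      y \in [set walk i | i : 'I_period].
    by move=> x' y exy; apply/idP/idP => /nbr_in; apply; rewrite // e_sym.
  by case/imsetP=> i _ -> /walk_nbr[] ->; apply: walk_in_image.
by rewrite -(closed_connect closed_image (conn v0 x)) (walk_in_image 0).
Qed.

Lemma two_regular_iso_cycle : connected_graph e -> iso_to_cycle e #|T|.
Proof.
move=> conn; pose g (i : 'I_period) := walk i.
have g_inj : injective g.
  by move=> i j /walk_inj_lt_period eq_ij; apply/val_inj/eq_ij.
have card_T : #|T| = period.
  apply/eqP; rewrite eqn_leq -{2}(card_ord period) (leq_card _ g_inj) andbT.
  rewrite -cardsT -(walk_image_full conn) -[X in _ <= X](card_ord period).
  exact: leq_imset_card.
have [g' gK g'K] : bijective g by apply: inj_card_bij; rewrite // card_ord card_T.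
rewrite card_T.
exists g'; split; first by exists g.
move=> x y; rewrite -[x in e x _]g'K -[y in e _ y]g'K walk_adjE /cycle_adj.
by rewrite !(modn_small (ltn_ord _)).
Qed.

End TwoRegular.



Section Degrees.
Variables (T : finType) (e : rel T).

Definition degrees := [seq deg e x | x <- enum T].

Lemma size_degrees : size degrees = #|T|.
Proof. by rewrite size_map cardE. Qed.

Lemma sumn_degrees : sumn degrees = \sum_x deg e x.
Proof. by rewrite sumnE big_map big_enum. Qed.

Lemma irrt_degrees : irrt e = sum_absdiff degrees %/ 2.
Proof.
rewrite /irrt /sum_absdiff big_map big_enum; congr (_ %/ 2).
by apply: eq_bigr => x _; rewrite big_map big_enum.
Qed.

Lemma mem_degrees x : deg e x \in degrees.
Proof. by apply: map_f; rewrite mem_enum. Qed.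

End Degrees.

Theorem theorem10 (n : nat) (T : finType) (e : rel T) :
  5 <= n -> #|T| = n -> unicyclic e ->
  ~ iso_to_cycle e n ->
  deg_seq e <> [:: 3] ++ nseq (n - 2) 2 ++ [:: 1] ->
  4 * n - 8 <= irrt e /\
  (irrt e = 4 * n - 8 <-> deg_seq e = [:: 3; 3] ++ nseq (n - 4) 2 ++ [:: 1; 1]).
Proof.
move=> n_ge5 card_T [[e_sym e_irr] conn card_edges] not_cycle not_tadpole.
have size_degs : size (degrees e) = n by rewrite size_degrees.
have degs_pos : all (leq 1) (degrees e).
  by apply/allP => _ /mapP[x _ ->]; apply: deg_gt0 => //; lia.
have degs_sum : sumn (degrees e) = 2 * size (degrees e).
  by rewrite sumn_degrees handshake // card_edges card_T size_degs.
have two_leaves : 1 < count_mem 1 (degrees e).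
  rewrite ltnNge leq_eqVlt ltnS leqn0; apply/negP => /orP[] /eqP leaves.
    apply: not_tadpole; apply/(sort_geqP _ (tadpole_degs_sorted n)).
    by rewrite -size_degs leaves1_tadpole.
  have /card_gt0P[v0 _] : 0 < #|T| by rewrite card_T; lia.
  apply: not_cycle; rewrite -card_T; apply: two_regular_iso_cycle e_sym e_irr _ v0 conn.
  move=> x; have := mem_degrees e x.
  by rewrite (leaves0_nseq2 degs_pos degs_sum leaves) => /nseqP[].
rewrite irrt_degrees.
have [ext | not_ext] := boolP (perm_eq (degrees e) (extremal_degs n)).
  have -> : sum_absdiff (degrees e) = (4 * n - 8) * 2.
    by rewrite sum_absdiff_extremal ?size_degs //; lia.
  rewrite mulnK //; split => //; split => // _.
  exact/(sort_geqP _ (extremal_degs_sorted n)).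
have := sum_absdiff_non_extremal degs_pos degs_sum; rewrite size_degs.
move=> /(_ n_ge5 two_leaves not_ext) sum_ge; split; first lia.
by split => [|/(sort_geqP _ (extremal_degs_sorted n))]; [lia | rewrite (negbTE not_ext)].
Qed.
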